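(* All kernels of an orientation of a claw-free graph have the same cardinality.
   Context: A graph is claw-free if no three vertices with a common neighbor form a stable set. An orientation of a graph orients each edge in exactly one direction (not necessarily clique-acyclic). A kernel of a digraph $D=(V,A)$ is a set $S$ of pairwise non-adjacent vertices such that every $u\in V\setminus S$ has an arc $(u,v)\in A$ with $v\in S$. *)

From mathcomp Require Import all_boot.
Set Implicit Arguments. Unset Strict Implicit. Unset Printing Implicit Defensive.

Definition simple_graph (T : finType) (e : rel T) : Prop :=
  irreflexive e /\ symmetric e.

Definition claw_free (T : finType) (e : rel T) : Prop :=
  forall v x y z : T,
    e v x -> e v y -> e v z -> x != y -> x != z -> y != z ->
    ~ [/\ ~~ e x y, ~~ e x z & ~~ e y z].

Definition orientation (T : finType) (e d : rel T) : Prop :=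
  (forall u v, d u v -> e u v) /\
  (forall u v, e u v -> (d u v && ~~ d v u) || (d v u && ~~ d u v)).

Definition kernel (T : finType) (d : rel T) (S : {set T}) : Prop :=
  (forall u v, u \in S -> v \in S -> ~~ d u v) /\
  (forall u, u \notin S -> exists2 v, v \in S & d u v).

From mathcomp Require Import all_boot.
From mathcomp Require Import zify.
Set Implicit Arguments. Unset Strict Implicit. Unset Printing Implicit Defensive.

(* If S1 and S2 are kernels, put A := S1 :\: S2 and B := S2 :\: S1.  Every
   vertex of A is absorbed by a vertex of S2, which cannot lie in S1 (S1 is
   stable), hence lies in B; symmetrically every vertex of B has an arc into A.
   So at least #|A| + #|B| edges join A and B.  On the other hand a vertex of
   a claw-free graph has at most two neighbours in a stable set, so there are
   at most 2 #|A| and at most 2 #|B| such edges.  Hence #|A| = #|B|. *)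

Definition stable (T : finType) (e : rel T) (X : {set T}) : Prop :=
  {in X &, forall x y, ~~ e x y}.

Lemma stableS (T : finType) (e : rel T) (X Y : {set T}) :
  X \subset Y -> stable e Y -> stable e X.
Proof. by move=> /subsetP XY Y_stable x y /XY xY /XY yY; apply: Y_stable. Qed.

Definition cross_count (T : finType) (r : rel T) (A B : {set T}) : nat :=
  \sum_(a in A) \sum_(b in B) (r a b : nat).

Section CrossCount.
Variables (T : finType) (r : rel T).
Implicit Types A B : {set T}.

Lemma cross_count_sym A B : symmetric r -> cross_count r A B = cross_count r B A.
Proof.
move=> r_sym; rewrite /cross_count exchange_big /=.
by apply: eq_bigr => b _; apply: eq_bigr => a _; rewrite r_sym.
Qed.

Lemma card_le_cross_count A B :
  {in A, forall a, exists2 b, b \in B & r a b} -> #|A| <= cross_count r A B.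
Proof.
move=> absorbed; rewrite -sum1_card; apply: leq_sum => a aA.
by have [b bB rab] := absorbed a aA; rewrite (bigD1 b) //= rab.
Qed.

End CrossCount.

Section ClawFree.
Variables (T : finType) (e : rel T).
Implicit Types A B X : {set T}.
Hypothesis e_claw_free : claw_free e.

Lemma claw_free_stable_nbhd X v : stable e X -> #|[set x in X | e v x]| <= 2.
Proof.
move=> X_stable; rewrite leqNgt; apply/card_gt2P.
move=> [x [y [z [[]]]]]; rewrite !inE => /andP[xX evx] /andP[yX evy] /andP[zX evz].
move=> [xy yz zx]; apply: (e_claw_free evx evy evz) => //; first by rewrite eq_sym.
by split; apply: X_stable.
Qed.

Lemma cross_count_stable_le A B : stable e B -> cross_count e A B <= 2 * #|A|.
Proof.
move=> B_stable; rewrite mulnC -sum_nat_const; apply: leq_sum => a _.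
rewrite -big_mkcondr /= sum1dep_card.
exact: claw_free_stable_nbhd.
Qed.

End ClawFree.

Section Orientation.
Variables (T : finType) (e d : rel T).
Implicit Types A B S : {set T}.
Hypotheses (e_sym : symmetric e) (d_orient : orientation e d).

Lemma orientation_edgeE a b : (e a b : nat) = d a b + d b a.
Proof.
have [d_sub d_one] := d_orient.
case eab: (e a b); first by move: (d_one a b eab); case: (d a b); case: (d b a).
by rewrite (contraFF (@d_sub a b)) // (contraFF (@d_sub b a)) // e_sym.
Qed.

Lemma cross_count_orientation A B :
  cross_count e A B = cross_count d A B + cross_count d B A.
Proof.
rewrite [cross_count d B A]/cross_count exchange_big -big_split /=.
apply: eq_bigr => a _; rewrite -big_split /=.
by apply: eq_bigr => b _; apply: orientation_edgeE.
Qed.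

Lemma kernel_stable S : kernel d S -> stable e S.
Proof.
move=> [S_indep _] x y xS yS; apply/negP => /(proj2 d_orient).
by rewrite (negbTE (S_indep x y xS yS)) (negbTE (S_indep y x yS xS)).
Qed.

End Orientation.

Lemma kernel_diff_absorbed (T : finType) (d : rel T) (S1 S2 : {set T}) :
  kernel d S1 -> kernel d S2 ->
  {in S1 :\: S2, forall a, exists2 b, b \in S2 :\: S1 & d a b}.
Proof.
move=> [S1_indep _] [_ S2_absorb] a; rewrite inE => /andP[aS2 aS1].
have [b bS2 dab] := S2_absorb a aS2; exists b => //.
rewrite inE bS2 andbT; apply: contraL dab => bS1.
exact: S1_indep.
Qed.

Theorem proposition4 (T : finType) (e d : rel T) :
  simple_graph e -> claw_free e -> orientation e d ->
  forall S1 S2 : {set T}, kernel d S1 -> kernel d S2 -> #|S1| = #|S2|.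
Proof.
move=> [_ e_sym] e_claw_free d_orient S1 S2 K1 K2.
set A := S1 :\: S2; set B := S2 :\: S1.
have lower : #|A| + #|B| <= cross_count e A B.
  rewrite (cross_count_orientation e_sym d_orient).
  by apply: leq_add; apply: card_le_cross_count; apply: kernel_diff_absorbed.
have upperA : cross_count e A B <= 2 * #|A|.
  apply: cross_count_stable_le => //.
  exact: stableS (subsetDl S2 S1) (kernel_stable d_orient K2).
have upperB : cross_count e A B <= 2 * #|B|.
  rewrite cross_count_sym //; apply: cross_count_stable_le => //.
  exact: stableS (subsetDl S1 S2) (kernel_stable d_orient K1).
have eq_AB : #|A| = #|B| by lia.
by rewrite -(cardsID S2 S1) -(cardsID S1 S2) setIC -/A -/B eq_AB.
Qed.
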